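(* Let $\mathcal{X}$ be a Polish space, $J:\mathcal{X}\to[0,+\infty]$ lower semicontinuous, and $Q\in\mathcal{P}(\mathcal{X})$. Then $$\sup_{f\in C_b(\mathcal{X})}\Big\{\int f\,dQ-\sup_{x\in\mathcal{X}}(f(x)-J(x))\Big\}=\int J\,dQ.$$ More generally, if $(\mathcal{X}_n^Q)_{n\ge1}$ is an increasing sequence of closed subsets of $\mathcal{X}$ with $\lim_nQ(\mathcal{X}_n^Q)=1$ and $\mathcal{G}_Q=\bigcup_{n\ge1}\mathcal{C}(\mathcal{X}_n^Q)$, where $\mathcal{C}(\mathcal{X}_o)=\{\mathbf{1}_{\mathcal{X}_o}\tilde f:\tilde f\in C_b(\mathcal{X})\}$, then the same identity holds with $C_b(\mathcal{X})$ replaced by $\mathcal{G}_Q$.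
   Context: $C_b(\mathcal{X})$: bounded continuous real functions; $\mathbf{1}_{\mathcal{X}_o}$ the indicator function of $\mathcal{X}_o$. *)

From HB Require Import structures.
From mathcomp Require Import all_boot all_order all_algebra.
From mathcomp Require Import all_classical all_reals all_analysis.
Set Implicit Arguments. Unset Strict Implicit. Unset Printing Implicit Defensive.
Import Order.TTheory GRing.Theory Num.Theory.
Import numFieldNormedType.Exports.
Local Open Scope classical_set_scope.
Local Open Scope ring_scope.

(* A Polish space, realized as a complete metric space (the topology is the
   metric topology of the complete pseudometric), which is Hausdorff (so the
   pseudometric is a metric) and separable (has a countable dense subset). *)
Definition polish_space (R : realType) (T : completePseudoMetricType R) : Prop :=
  hausdorff_space T /\ exists D : set T, countable D /\ dense D.

Definition borel_type (T : ptopologicalType) := g_sigma_algebraType (@open T).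

Definition Cb (R : realType) (T : topologicalType) : set (T -> R) :=
  [set f | continuous f /\ exists M : R, forall x, `|f x| <= M].
Arguments Cb : clear implicits.

Definition CXo (R : realType) (T : topologicalType) (Xo : set T) : set (T -> R) :=
  [set g | exists2 f, Cb R T f & g = (fun x => \1_Xo x * f x)].
Arguments CXo : clear implicits.
Arguments CXo R {T} Xo.

Definition dual_objective (R : realType) (T : ptopologicalType)
    (Q : probability (borel_type T) R) (J : T -> \bar R) (f : T -> R) : \bar R :=
  ((\int[Q]_(x in setT) (f x)%:E)
   - ereal_sup (range (fun x : T => (f x)%:E - J x)))%E.

(** For [J] lower semicontinuous and nonnegative, the inf-convolutions
    [J_k x = inf_y (min (J y) (k+1) + (k+1) d(x, y))] are bounded,
    (k+1)-Lipschitz, and increase pointwise to [J].  Testing the functional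
    against [1_{X_k} J_k <= J] (the sup over [x] is then [<= 0]) and letting
    [k -> oo] by monotone convergence gives [int J dQ] as a lower bound, since
    [Q] does not charge the complement of [\bigcup_k X_k].  Conversely, if
    [f - J <= s] everywhere then [int f dQ - s <= int J dQ]. *)

From HB Require Import structures.
From mathcomp Require Import all_boot all_order all_algebra.
From mathcomp Require Import all_classical all_reals all_analysis.
From mathcomp Require Import measurable_realfun lra.
Import Order.TTheory GRing.Theory Num.Theory.
Import numFieldNormedType.Exports.
Local Open Scope classical_set_scope.
Local Open Scope ring_scope.

Section borel_duality.
Context {R : realType} {T : ptopologicalType}.
Local Notation BT := (borel_type T).

Lemma open_borel_measurable (A : set T) : open A -> measurable (A : set BT).
Proof. exact: sub_sigma_algebra. Qed.

Lemma closed_borel_measurable (A : set T) : closed A -> measurable (A : set BT).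
Proof.
move=> cA; rewrite -(setCK A); apply: measurableC.
by apply: open_borel_measurable; exact: closed_openC.
Qed.

Lemma continuous_borel_measurable (f : T -> R) :
  continuous f -> measurable_fun [set: BT] (f : BT -> R).
Proof.
move=> /continuousP cf.
apply: (measurability _ (RGenOpens.measurableE R)) => _ [_ [a [b ->] <-]].
apply: measurableI => //; apply: open_borel_measurable.
exact/cf/interval_open.
Qed.

Lemma lower_semicontinuous_borel_measurable (f : T -> \bar R) :
  lower_semicontinuous f -> measurable_fun [set: BT] (f : BT -> \bar R).
Proof.
move=> /lower_semicontinuousP f_lsc.
apply: (measurability _ (ErealGenOInfty.measurableE R)) => _ [_ [a ->] <-].
by apply: measurableI => //; apply: open_borel_measurable; rewrite preimage_itvoy.
Qed.

Definition bounded_borel_fun (g : T -> R) : Prop :=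
  measurable_fun [set: BT] (g : BT -> R) /\ exists M, forall x, `|g x| <= M.

Lemma Cb_bounded_borel_fun g : Cb R T g -> bounded_borel_fun g.
Proof. by case=> g_cont g_bd; split => //; exact: continuous_borel_measurable. Qed.

Lemma CXo_bounded_borel_fun (Xo : set T) g :
  closed Xo -> CXo R Xo g -> bounded_borel_fun g.
Proof.
move=> Xo_closed [f /Cb_bounded_borel_fun [f_meas [M f_bd]] ->]; split.
  apply: measurable_funM => //; apply: measurable_indic.
  exact: closed_borel_measurable.
exists M => x; rewrite indicE; case: (x \in Xo); rewrite ?mul1r ?mul0r //.
by rewrite normr0 (le_trans _ (f_bd x)).
Qed.

Variables (Q : probability BT R) (J : T -> \bar R).
Hypothesis J_ge0 : forall x, (0 <= J x)%E.
Hypothesis J_meas : measurable_fun [set: BT] (J : BT -> \bar R).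
Local Open Scope ereal_scope.

Lemma dual_objective_le_integral (g : T -> R) :
  bounded_borel_fun g -> dual_objective Q J g <= \int[Q]_(x in setT) J x.
Proof.
move=> [g_meas [M g_bd]]; rewrite /dual_objective.
set s := ereal_sup _.
have QT : Q [set: BT] = 1 := probability_setT Q.
have gJs x : (g x)%:E - J x <= s by apply: ereal_sup_ubound; exists x.
case Es : s gJs => [r| |] gJs; last 2 first.
- by rewrite addeNy leNye.
- have Jy x : J x = +oo.
    by move: (gJs x) (J_ge0 x); rewrite leeNy_eq; case: (J x).
  have -> : \int[Q]_(x in setT) J x = \int[Q]_(x in setT) cst +oo x.
    by apply: eq_integral => x _; rewrite Jy.
  by rewrite integral_cst // [X in _ * X]QT mule1 leey.
have g_int : Q.-integrable [set: BT] (EFin \o (g : BT -> R)).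
  apply: measurable_bounded_integrable => //; first by rewrite [X in X < _]QT ltry.
  exists M; split; first by rewrite num_real.
  by move=> y My x _; apply: le_trans (g_bd x) (ltW My).
have grJ x : ((g x - r)%:E <= J x).
  move: (gJs x) (J_ge0 x); case: (J x) => [y| |] //=; rewrite ?leey //.
  by rewrite -EFinD !lee_fin; lra.
have -> : \int[Q]_(x in [set: BT]) (g x)%:E - r%:E =
           \int[Q]_(x in [set: BT]) (g x - r)%:E.
  rewrite [RHS](eq_integral (fun x : BT => (g x)%:E - (cst r x)%:E)) //.
  rewrite integralB_EFin //; last exact: finite_measure_integrable_cst.
  rewrite [X in _ = _ - X](eq_integral (cst r%:E)) //.
  by rewrite integral_cst // [X in _ * X]QT mule1.
set h := fun x : BT => (g x - r)%:E.
have h_le_pos : \int[Q]_(x in [set: BT]) h x <= \int[Q]_(x in [set: BT]) h^\+ x.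
  by rewrite integralE -[leRHS]sube0 leeB // integral_ge0.
apply: le_trans h_le_pos _; apply: ge0_le_integral => //.
- apply/measurable_funepos/measurable_EFinP.
  exact: measurable_funB.
- by move=> x _; rewrite funeposE ge_max J_ge0 grJ.
Qed.

Lemma integral_le_dual_objective (h : T -> R) :
  (forall x, (h x)%:E <= J x) ->
  \int[Q]_(x in setT) (h x)%:E <= dual_objective Q J h.
Proof.
move=> hJ; rewrite /dual_objective -[X in X <= _]sube0 leeB //.
by apply: ge_ereal_sup => _ [x _ <-]; rewrite sube_le0.
Qed.

End borel_duality.

Lemma lee_fin_approx (R : realFieldType) (x y : \bar R) :
  (forall r : R, (r%:E < x -> r%:E <= y)%E) -> (x <= y)%E.
Proof.
move=> xy; rewrite leNgt; apply/negP => yx.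
case: y yx xy => [s| |] yx xy.
- case: x yx xy => [t| |] // yx xy.
    have := xy ((s + t) / 2); rewrite !lte_fin lee_fin in yx *.
    by move=> /(_ ltac:(lra)); lra.
  by have := xy (s + 1); rewrite lee_fin => /(_ (ltry _)); lra.
- by rewrite ltNge leey in yx.
- case: x yx xy => [t| |] // _ xy.
    by have := xy (t - 1); rewrite lte_fin leeNy_eq => /(_ ltac:(lra)).
  by have := xy 0; rewrite leeNy_eq => /(_ (ltry _)).
Qed.

Section lipschitz_approx.
Context {R : realType} {T : pseudoMetricType R} (J : T -> \bar R).
Hypothesis J_ge0 : forall x, (0 <= J x)%E.
Local Open Scope ereal_scope.

Definition lipschitz_approx (k : nat) (x : T) : \bar R :=
  ereal_inf [set mine (J y) k.+1%:R%:E + k.+1%:R%:E * edist (x, y) | y in setT].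

Lemma lipschitz_approx_ge0 k x : 0 <= lipschitz_approx k x.
Proof.
apply/ereal_infP => _ [y _ <-]; apply: adde_ge0.
  by rewrite le_min J_ge0 lee_fin ler0n.
by rewrite mule_ge0 ?edist_ge0 ?lee_fin ?ler0n.
Qed.

Lemma lipschitz_approx_le_min k x : lipschitz_approx k x <= mine (J x) k.+1%:R%:E.
Proof.
apply: ereal_inf_lbound; exists x => //.
by rewrite (_ : edist (x, x) = 0) ?mule0 ?adde0 //; apply/edist_closeP/close_refl.
Qed.

Lemma lipschitz_approx_le k x : lipschitz_approx k x <= J x.
Proof. by rewrite (le_trans (lipschitz_approx_le_min k x)) // ge_min lexx. Qed.

Lemma lipschitz_approx_fin_num k x : lipschitz_approx k x \is a fin_num.
Proof.
rewrite ge0_fin_numE ?lipschitz_approx_ge0 //.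
by rewrite (le_lt_trans (lipschitz_approx_le_min k x)) // gt_min ltry orbT.
Qed.

Lemma lipschitz_approx_nondecreasing x :
  {homo lipschitz_approx ^~ x : k l / (k <= l)%N >-> k <= l}.
Proof.
move=> k l kl; apply/ereal_infP => _ [y _ <-].
have kl' : (k.+1%:R <= l.+1%:R :> R)%R by rewrite ler_nat ltnS.
apply: ge_ereal_inf; eexists; first by exists y.
apply: leeD.
  by rewrite le_min ge_min lexx /= ge_min lee_fin kl' orbT.
by apply: (lee_wpmul2r _ _); rewrite ?edist_ge0 ?lee_fin.
Qed.

Lemma lipschitz_approx_ball k {x x' : T} {r : R} : (0 < r)%R -> ball x r x' ->
  lipschitz_approx k x' <= lipschitz_approx k x + (k.+1%:R * r)%:E.
Proof.
move=> r_gt0 xx'; rewrite -leeBlDr //; apply/ereal_infP => _ [y _ <-].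
rewrite leeBlDr // -addeA; apply: ge_ereal_inf; eexists; first by exists y.
apply: leeD => //.
have xx'r : edist (x', x) <= r%:E by apply: edist_fin => //; exact: ball_sym.
have x'y : edist (x', y) <= edist (x, y) + r%:E.
  by rewrite addeC (le_trans (edist_triangle x' x y)) ?leeD.
rewrite EFinM -ge0_muleDr ?lee_fin ?edist_ge0 ?(ltW r_gt0) //.
by apply: (lee_wpmul2l _ x'y); rewrite lee_fin.
Qed.

(* Choose [k+1 > max(a, a/r)] where [J > a] on [ball x r]: points in the ball
   contribute [min (J y) (k+1) > a], points outside pay [(k+1) r >= a]. *)
Lemma lipschitz_approx_eventually_ge (J_lsc : lower_semicontinuous J) x (a : R) :
  a%:E < J x -> exists k, a%:E <= lipschitz_approx k x.
Proof.
move=> aJ; have [a_le0|a_gt0] := leP a 0%R.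
  by exists 0%N; rewrite (le_trans _ (lipschitz_approx_ge0 0 x)) // lee_fin.
have [V /nbhs_ballP [r r_gt0 rV] aV] := J_lsc x a aJ.
have [k ark] : exists k, (Num.max a (a / r) < k.+1%:R)%R.
  exists (Num.Def.archi_bound (Num.max a (a / r))%R).
  by rewrite (lt_le_trans (archi_boundP _)) ?ler_nat // le_max ltW.
rewrite gt_max ltr_pdivrMr // in ark; case/andP: ark => ak akr.
exists k; apply/ereal_infP => _ [y _ <-].
have [xy|xy] := pselect (ball x r y).
  rewrite (le_trans _ (leeDl _ _)) ?mule_ge0 ?edist_ge0 //.
  by rewrite le_min (ltW (aV _ (rV _ xy))) lee_fin ltW.
have r_le : r%:E <= edist (x, y) by rewrite leNgt; apply/negP => /edist_lt_ball.
rewrite (le_trans _ (leeDr _ _)) ?le_min ?J_ge0 ?lee_fin ?ler0n //.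
by rewrite (le_trans _ (lee_wpmul2l _ r_le)) ?lee_fin ?ler0n // ltW.
Qed.

Lemma lipschitz_approx_cvg (J_lsc : lower_semicontinuous J) x :
  lipschitz_approx ^~ x @ \oo --> J x.
Proof.
suff <- : ereal_sup (range (lipschitz_approx ^~ x)) = J x.
  exact/ereal_nondecreasing_cvgn/lipschitz_approx_nondecreasing.
apply/eqP; rewrite eq_le; apply/andP; split.
  by apply: ge_ereal_sup => _ [k _ <-]; exact: lipschitz_approx_le.
apply: lee_fin_approx => a /(lipschitz_approx_eventually_ge J_lsc).
by move=> [k ak]; apply: le_trans ak _; apply: ereal_sup_ubound; exists k.
Qed.

Definition lipschitz_approxR (k : nat) (x : T) : R := fine (lipschitz_approx k x).

Lemma lipschitz_approxRE k x : (lipschitz_approxR k x)%:E = lipschitz_approx k x.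
Proof. by rewrite fineK ?lipschitz_approx_fin_num. Qed.

Lemma lipschitz_approxR_ge0 k x : (0 <= lipschitz_approxR k x)%R.
Proof. by rewrite -lee_fin lipschitz_approxRE lipschitz_approx_ge0. Qed.

Lemma lipschitz_approxR_le k x : (lipschitz_approxR k x)%:E <= J x.
Proof. by rewrite lipschitz_approxRE lipschitz_approx_le. Qed.

Lemma lipschitz_approxR_Cb k : Cb R T (lipschitz_approxR k).
Proof.
split.
  move=> x; apply/cvgrPdist_le => e e_gt0.
  have ek : (0 < e / k.+1%:R)%R by rewrite divr_gt0.
  apply: filterS (nbhsx_ballx x _ ek) => x' xx'.
  have := lipschitz_approx_ball k ek xx'.
  have := lipschitz_approx_ball k ek (ball_sym xx').
  rewrite -!lipschitz_approxRE -!EFinD !lee_fin mulrC divfK ?pnatr_eq0 //.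
  by move=> ? ?; rewrite ler_norml; apply/andP; split; lra.
exists k.+1%:R => x; rewrite ger0_norm ?lipschitz_approxR_ge0 // -lee_fin.
rewrite lipschitz_approxRE (le_trans (lipschitz_approx_le_min k x)) //.
by rewrite ge_min lexx orbT.
Qed.

End lipschitz_approx.

Lemma integral_setT_conull {d} {X : measurableType d} {R : realType}
    {mu : {measure set X -> \bar R}} {U : set X} {f : X -> \bar R} :
  measurable U -> mu (~` U) = 0%E -> measurable_fun [set: X] f ->
  (forall x, (0 <= f x)%E) ->
  (\int[mu]_(x in [set: X]) f x = \int[mu]_(x in U) f x)%E.
Proof.
move=> U_meas Uc0 f_meas f_ge0.
rewrite (ge0_negligible_integral _ _ _ _ Uc0) ?setTD ?setCK //.
exact: measurableC.
Qed.

Section dual_representation.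
Context {R : realType} {T : pseudoPMetricType R}.
Local Notation BT := (borel_type T).
Variables (Q : probability BT R) (J : T -> \bar R).
Hypothesis J_ge0 : forall x, (0 <= J x)%E.
Hypothesis J_lsc : lower_semicontinuous J.
Local Open Scope ereal_scope.

Lemma integral_truncated_lipschitz_approx_cvg (X : nat -> set T) :
    (forall n, measurable (X n : set BT)) ->
    {homo X : n m / (n <= m)%N >-> (n <= m)%O} ->
    Q (\bigcup_n X n) = 1 ->
  \int[Q]_(x in [set: BT]) (\1_(X n) x * lipschitz_approxR J n x)%:E @[n --> \oo]
    --> \int[Q]_(x in [set: BT]) J x.
Proof.
move=> X_meas X_nd QU; set U := \bigcup_n X n.
have U_meas : measurable (U : set BT) by exact: bigcupT_measurable.
have Uc0 : Q (~` U) = 0 by rewrite probability_setC // QU subee.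
pose g n (x : BT) := (\1_(X n) x * lipschitz_approxR J n x)%:E.
have g_ge0 n x : 0 <= g n x.
  by rewrite lee_fin mulr_ge0 ?lipschitz_approxR_ge0.
have g_meas n : measurable_fun [set: BT] (g n).
  apply/measurable_EFinP/measurable_funM; first exact: measurable_indic.
  by apply: (@continuous_borel_measurable R T); case: (lipschitz_approxR_Cb J J_ge0 n).
have g_nd x : {homo g ^~ x : n m / (n <= m)%N >-> n <= m}.
  move=> n m nm; rewrite /g lee_fin !indicE.
  have [xn|_] := boolP (x \in X n); last first.
    by rewrite mul0r mulr_ge0 ?lipschitz_approxR_ge0.
  have /subsetPset/(_ x) xm := X_nd _ _ nm.
  rewrite (mem_set (xm (set_mem xn))) !mul1r -lee_fin !lipschitz_approxRE //.
  exact: lipschitz_approx_nondecreasing.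
have gJ x : U x -> g ^~ x @ \oo --> J x.
  move=> [n _ xn]; apply: cvg_trans (lipschitz_approx_cvg J J_ge0 J_lsc x).
  apply: near_eq_cvg; near=> m.
  have nm : (n <= m)%N by near: m; exists n.
  have /subsetPset/(_ x xn) xm := X_nd n m nm.
  by rewrite /g indicE mem_set // mul1r lipschitz_approxRE.
rewrite (integral_setT_conull U_meas Uc0) //; last first.
  exact: lower_semicontinuous_borel_measurable.
rewrite (eq_integral (fun x => limn (g ^~ x))); last first.
  by move=> x /set_mem Ux; rewrite (cvg_lim _ (gJ x Ux)).
rewrite (_ : (fun n => _) = fun n => \int[Q]_(x in U) g n x); last first.
  by apply/funext => n; exact: integral_setT_conull U_meas Uc0 (g_meas n) (g_ge0 n).
apply: cvg_monotone_convergence => // n; exact: measurable_funTS.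
Unshelve. all: by end_near.
Qed.

Lemma ereal_sup_dual_objective (S : set (T -> R)) (X : nat -> set T) :
    (forall n, measurable (X n : set BT)) ->
    {homo X : n m / (n <= m)%N >-> (n <= m)%O} ->
    Q (\bigcup_n X n) = 1 ->
    S `<=` bounded_borel_fun ->
    (forall n, S (fun x => \1_(X n) x * lipschitz_approxR J n x)%R) ->
  ereal_sup (dual_objective Q J @` S) = \int[Q]_(x in [set: BT]) J x.
Proof.
move=> X_meas X_nd QU S_bd S_approx.
have J_meas := @lower_semicontinuous_borel_measurable R T J J_lsc.
have approx_cvg := integral_truncated_lipschitz_approx_cvg X X_meas X_nd QU.
apply/eqP; rewrite eq_le; apply/andP; split.
  by apply: ge_ereal_sup => _ [g /S_bd g_bd <-]; exact: dual_objective_le_integral.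
rewrite -(cvg_lim _ approx_cvg) //; apply: lime_le; first exact: cvgP approx_cvg.
apply: nearW => n; set h := (fun x => \1_(X n) x * lipschitz_approxR J n x)%R.
apply: le_trans (integral_le_dual_objective Q J h _) _; last first.
  by apply: ereal_sup_ubound; exists h => //; exact: S_approx.
move=> x; apply: le_trans (lipschitz_approxR_le J J_ge0 n x).
rewrite lee_fin /h indicE.
by case: (x \in X n); rewrite ?mul1r ?mul0r ?lipschitz_approxR_ge0.
Qed.

End dual_representation.

Theorem mainTheorem12 (R : realType) (T : completePseudoMetricType R)
  (HT : polish_space T) (J : T -> \bar R)
  (J_ge0 : forall x, (0 <= J x)%E) (J_lsc : lower_semicontinuous J)
  (Q : probability (borel_type T) R) :
  ereal_sup (dual_objective Q J @` Cb R T) = (\int[Q]_(x in setT) J x)%E /\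
  (forall Xn : nat -> set T,
     (forall n, closed (Xn n)) ->
     (forall n, Xn n `<=` Xn n.+1) ->
     (Q (Xn n) @[n --> \oo] --> 1%E) ->
     ereal_sup (dual_objective Q J @` \bigcup_n CXo R (Xn n))
       = (\int[Q]_(x in setT) J x)%E).
Proof.
split.
  apply: (ereal_sup_dual_objective Q J J_ge0 J_lsc _ (fun=> setT)) => //.
  - by rewrite bigcup_const ?probability_setT //; exists 0%N.
  - by move=> g; exact: Cb_bounded_borel_fun.
  - move=> n; rewrite (_ : (fun x => _) = lipschitz_approxR J n).
      exact: lipschitz_approxR_Cb.
    by apply/funext => x; rewrite indicE in_setT mul1r.
move=> X X_closed X_step QX.
have X_meas n : measurable (X n : set (borel_type T)).
  exact: closed_borel_measurable.
have X_nd : {homo X : n m / (n <= m)%N >-> (n <= m)%O}.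
  by apply/nondecreasing_seqP => n; apply/subsetPset/X_step.
apply: (ereal_sup_dual_objective Q J J_ge0 J_lsc _ _ X_meas X_nd).
- apply: (cvg_unique (@ereal_hausdorff R) _ QX).
  exact: (nondecreasing_cvg_mu (mu := Q) X_meas (bigcupT_measurable _ X_meas) X_nd).
- by move=> g [n _ gX]; exact: CXo_bounded_borel_fun (X_closed n) gX.
- move=> n; exists n => //; exists (lipschitz_approxR J n) => //.
  exact: lipschitz_approxR_Cb.
Qed.
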